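(* Let $n\ge 1$, $d\ge 1$ and $m\ge 1$ be integers, let $p\in(0,1)$ and $\delta\in(0,1)$, and let $I\subseteq[n]$ be a fixed set with $|I|\le d$. Let $M$ be a random $m\times n$ matrix whose entries are independent, each equal to $0$ with probability $p$ and to $1$ with probability $1-p$. For integers $d_1,d_2,k$ put $$P(n,d_1,d_2,k,p)=n^{d_2-k}\left(1-p^{d_2}-p^{d_1}+2p^{d_1+d_2-k}\right)^m,$$ and let $\Pi=\max P(n,d_1,d_2,k,p)$, the maximum being over all integers $d_1,d_2,k$ with $0\le d_1,d_2\le d$, $0\le k\le\min(d_1,d_2)$, excluding the triples with $d_1=d_2=k$. If $\Pi\le \delta/(d^2 2^d)$, then with probability at least $1-\delta$ the matrix $M$ is $(I,d)$-separable.
   Context: For $J\subseteq[n]$ and $a\in\{0,1\}^n$, $T(J,a)=1$ if $a_j=1$ for some $j\in J$ and $T(J,a)=0$ otherwise (so $T(\emptyset,a)=0$). For an $m\times n$ 0/1 matrix $M$ with rows $M_1,\dots,M_m$, $T(J,M)$ is the vector $(T(J,M_i))_{i=1}^m$. The matrix $M$ is called $(I,d)$-separable if for every $J\subseteq[n]$ with $|J|\le d$ and $J\ne I$ we have $T(J,M)\ne T(I,M)$. *)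

From HB Require Import structures.
From mathcomp Require Import all_boot all_order all_algebra.
Set Implicit Arguments. Unset Strict Implicit. Unset Printing Implicit Defensive.
Import Order.TTheory GRing.Theory Num.Theory.
Local Open Scope ring_scope.

(* T(J,a) for a row a of M (entries in bool, true = 1). *)
Definition Trow (n : nat) (J : {set 'I_n}) (a : 'I_n -> bool) : bool :=
  [exists j in J, a j].

Definition Tmat (m n : nat) (J : {set 'I_n}) (M : 'M[bool]_(m, n)) : {ffun 'I_m -> bool} :=
  [ffun i => Trow J (fun j => M i j)].

Definition separable (m n : nat) (I : {set 'I_n}) (d : nat) (M : 'M[bool]_(m, n)) : bool :=
  [forall J : {set 'I_n}, ((#|J| <= d)%N && (J != I)) ==> (Tmat J M != Tmat I M)].

Definition mx_weight (R : realFieldType) (p : R) (m n : nat) (M : 'M[bool]_(m, n)) : R :=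
  \prod_(i < m) \prod_(j < n) (if M i j then 1 - p else p).

Definition prob_mx (R : realFieldType) (p : R) (m n : nat) (A : pred 'M[bool]_(m, n)) : R :=
  \sum_(M : 'M[bool]_(m, n) | A M) mx_weight p M.

Definition Pfun (R : realFieldType) (n d1 d2 k : nat) (p : R) (m : nat) : R :=
  (n%:R) ^+ (d2 - k) * (1 - p ^+ d2 - p ^+ d1 + 2 * p ^+ (d1 + d2 - k)) ^+ m.

(* Pi = max over 0<=d1,d2<=d, 0<=k<=min(d1,d2), not d1=d2=k.
   All terms are >= 0 (for 0<p<1), so 0 as neutral element is harmless. *)
Definition Pimax (R : realFieldType) (n d m : nat) (p : R) : R :=
  \big[Num.max/0]_(d1 < d.+1) \big[Num.max/0]_(d2 < d.+1)
    \big[Num.max/0]_(k < d.+1 | (k <= minn d1 d2)%N && ~~ ((d1 == d2) && (d2 == k)))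
       Pfun n d1 d2 k p m.

From HB Require Import structures.
From mathcomp Require Import all_boot all_order all_algebra ring lra zify.
Import Order.TTheory GRing.Theory Num.Theory.

(* Union bound over the sets J that could spoil separability.  Rows of M are
   independent, so T(J,M) = T(I,M) has probability q^m, where by
   inclusion-exclusion over "the row vanishes on J, on I, on I u J" a single row
   agrees with probability q = 1 - p^|J| - p^|I| + 2 p^|I u J|.  Grouping the J
   by d2 = |J| and k = |I n J|, such a class has at most C(|I|,k) n^(d2-k)
   members, so it contributes at most C(|I|,k) P(n,|I|,d2,k,p) <= C(|I|,k) Pi.
   Summing C(|I|,k) over the admissible pairs (d2,k) gives at most
   d 2^|I| <= d^2 2^d. *)

Set Implicit Arguments.
Unset Strict Implicit.
Unset Printing Implicit Defensive.

Definition admissible (d1 d2 k : nat) : bool :=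
  (k <= minn d1 d2) && ~~ ((d1 == d2) && (d2 == k)).

Lemma admissible_sizes n (I J : {set 'I_n}) :
  J != I -> admissible #|I| #|J| #|I :&: J|.
Proof.
move=> neqJI; rewrite /admissible leq_min !subset_leq_card ?subsetIl ?subsetIr //=.
apply: contra neqJI => /andP[/eqP cardIJ /eqP cardJIJ].
have meetI : I :&: J = I by apply/eqP; rewrite eqEcard subsetIl cardIJ cardJIJ /=.
have meetJ : I :&: J = J by apply/eqP; rewrite eqEcard subsetIr cardJIJ /=.
by rewrite -meetJ meetI.
Qed.

Lemma bin_leq_expn n k : 'C(n, k) <= n ^ k.
Proof.
apply: leq_trans (leq_pmulr _ (fact_gt0 k)) _.
rewrite bin_ffact ffact_prod -[X in _ <= _ ^ X](card_ord k) -prod_nat_const.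
by apply: leq_prod => i _; apply: leq_subr.
Qed.

Lemma sum_bin_widen d1 d : d1 <= d -> \sum_(k < d.+1) 'C(d1, k) = 2 ^ d1.
Proof.
move=> le_d1d.
have -> : 2 ^ d1 = \sum_(k < d1.+1) 'C(d1, k).
  by rewrite -[2]/(1 + 1) expnDn; apply: eq_bigr => k _; rewrite !exp1n !muln1.
rewrite (big_ord_widen _ (fun k => 'C(d1, k)) (_ : d1 < d.+1)) // [RHS]big_mkcond.
by apply: eq_bigr => k _; case: ltnP => // /bin_small ->.
Qed.

(* The term [d2 == d1] pays for the excluded triple [k = d1 = d2]; summed over [d2]
   it is absorbed by the single [1] of the row [d2 = 0]. *)
Lemma sum_admissible_bin_row d1 d d2 : d1 <= d -> d2 <= d ->
  \sum_(k < d.+1 | admissible d1 d2 k) 'C(d1, k) + (d2 == d1)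
  <= (if d2 == 0 then 1 else 2 ^ d1).
Proof.
move=> le_d1d le_d2d; have [->|d2_gt0] := eqVneq d2 0.
  rewrite big_mkcond big_ord_recl /= big1 // /admissible.
  by case: d1 {le_d1d}.
rewrite -(sum_bin_widen le_d1d); have [eq_d21|neq_d21] := eqVneq d2 d1; last first.
  by rewrite addn0 big_mkcond; apply: leq_sum => k _; case: ifP.
subst d2; rewrite addn1 [X in _ <= X](bigD1 (Ordinal (le_d1d : d1 < d.+1))) //=.
rewrite binn add1n ltnS big_mkcond [X in _ <= X]big_mkcond /=.
apply: leq_sum => k _; rewrite /admissible !eqxx -val_eqE /= eq_sym.
by case: (k != d1 :> nat); rewrite ?andbF //; case: ifP.
Qed.

Lemma sum_admissible_bin d1 d : d1 <= d ->
  \sum_(d2 < d.+1) \sum_(k < d.+1 | admissible d1 d2 k) 'C(d1, k) <= d * 2 ^ d1.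
Proof.
move=> le_d1d.
have one_diag : \sum_(d2 < d.+1) (d2 == d1 :> nat) = 1.
  rewrite (bigD1 (Ordinal (le_d1d : d1 < d.+1))) //= eqxx big1 // => d2 neq.
  by apply/eqP; rewrite eqb0; apply: contra neq => /eqP eq; apply/eqP/val_inj.
have all_rows : \sum_(d2 < d.+1) (if d2 == 0 :> nat then 1 else 2 ^ d1) = 1 + d * 2 ^ d1.
  by rewrite big_ord_recl /= (eq_bigr (fun _ => 2 ^ d1)) // sum_nat_const card_ord.
have : \sum_(d2 < d.+1) (\sum_(k < d.+1 | admissible d1 d2 k) 'C(d1, k) + (d2 == d1 :> nat))
       <= \sum_(d2 < d.+1) (if d2 == 0 :> nat then 1 else 2 ^ d1).
  by apply: leq_sum => d2 _; apply: sum_admissible_bin_row (leq_ord d2).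
by rewrite big_split /= one_diag all_rows addnC leq_add2l.
Qed.

(* [J] is determined by [I :&: J], a [k]-subset of [I], and by [J :\: I], a
   [(d2 - k)]-subset of ['I_n]. *)
Lemma card_sets_meeting n (I : {set 'I_n}) d2 k :
  #|[set J : {set 'I_n} | (#|J| == d2) && (#|I :&: J| == k)]| <= 'C(#|I|, k) * n ^ (d2 - k).
Proof.
set C := [set J | _].
have split_inj : injective (fun J : {set 'I_n} => (I :&: J, J :\: I)).
  move=> J1 J2 [meet_eq diff_eq].
  by rewrite -(setID J1 I) -(setID J2 I) ![_ :&: I]setIC meet_eq diff_eq.
rewrite -(card_imset C split_inj).
pose D := setX [set A : {set 'I_n} | A \subset I & #|A| == k] [set B : {set 'I_n} | #|B| == d2 - k].
have /subset_leq_card/leq_trans-> // : [set (I :&: J, J :\: I) | J in C] \subset D.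
  apply/subsetP => x /imsetP[J]; rewrite inE => /andP[/eqP cardJ /eqP cardIJ] ->.
  by rewrite !inE /= subsetIl cardIJ eqxx /= cardsD cardJ setIC cardIJ.
by rewrite cardsX cards_draws card_draws card_ord leq_mul2l bin_leq_expn orbT.
Qed.

Lemma Trow_set0 n (a : 'I_n -> bool) : Trow set0 a = false.
Proof. by apply/existsP => -[j]; rewrite inE. Qed.

Lemma Trow_setU n (A B : {set 'I_n}) (a : 'I_n -> bool) :
  Trow (A :|: B) a = Trow A a || Trow B a.
Proof.
apply/existsP/orP => [[j /andP[]]|[] /existsP[j /andP[jS aj]]].
- by rewrite inE => /orP[jS|jS] aj; [left|right]; apply/existsP; exists j; rewrite jS aj.
- by exists j; rewrite inE jS aj.
- by exists j; rewrite inE jS aj orbT.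
Qed.

Lemma Trow_finfun n (S : {set 'I_n}) (a : 'I_n -> bool) : Trow S (finfun a) = Trow S a.
Proof. by apply: eq_existsb => j; rewrite ffunE. Qed.

Definition row_ffun m n (M : 'M[bool]_(m, n)) (i : 'I_m) : {ffun 'I_n -> bool} :=
  [ffun j => M i j].

Lemma Tmat_eq_rows m n (I J : {set 'I_n}) (M : 'M[bool]_(m, n)) :
  (Tmat J M == Tmat I M) = [forall i, Trow J (row_ffun M i) == Trow I (row_ffun M i)].
Proof.
apply/eqP/forallP => [eqT i | eqT].
  by move/ffunP/(_ i): eqT; rewrite !ffunE !Trow_finfun => ->.
by apply/ffunP => i; move: (eqT i); rewrite !ffunE !Trow_finfun => /eqP.
Qed.

Local Open Scope ring_scope.

Lemma sum_exists_le (R : numDomainType) (X T : finType) (w : X -> R)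
    (P : pred T) (E : T -> pred X) :
  (forall x, 0 <= w x) ->
  \sum_(x | [exists t, P t && E t x]) w x <= \sum_(t | P t) \sum_(x | E t x) w x.
Proof.
move=> w_ge0; rewrite (exchange_big_dep xpredT) //= big_mkcond /=.
apply: ler_sum => x _; case: ifP => [/existsP[t /andP[Pt Etx]]|_]; last exact: sumr_ge0.
by rewrite (bigD1 t) ?Pt ?Etx //= lerDl sumr_ge0.
Qed.

Section BernoulliMatrix.
Variables (R : realFieldType) (p : R).

Definition bern (b : bool) : R := if b then 1 - p else p.

Definition row_weight n (a : {ffun 'I_n -> bool}) : R := \prod_j bern (a j).

Definition row_prob n (A : pred {ffun 'I_n -> bool}) : R := \sum_(a | A a) row_weight a.

Lemma mx_weight_rows m n (M : 'M[bool]_(m, n)) :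
  mx_weight p M = \prod_i row_weight (row_ffun M i).
Proof. by apply: eq_bigr => i _; apply: eq_bigr => j _; rewrite ffunE. Qed.

Lemma sum_mx_prod_rows m n (G : 'I_m -> {ffun 'I_n -> bool} -> R) :
  \sum_(M : 'M[bool]_(m, n)) \prod_i G i (row_ffun M i) = \prod_i \sum_a G i a.
Proof.
rewrite bigA_distr_bigA /=.
rewrite (reindex (fun f : {ffun 'I_m -> {ffun 'I_n -> bool}} => \matrix_(i, j) f i j)) /=.
  apply: eq_bigr => f _; apply: eq_bigr => i _; congr (G i _).
  by apply/ffunP => j; rewrite !ffunE mxE.
exists (fun M : 'M[bool]_(m, n) => [ffun i => row_ffun M i]) => [f _|M _].
  by apply/ffunP => i; apply/ffunP => j; rewrite !ffunE mxE.
by apply/matrixP => i j; rewrite !mxE !ffunE.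
Qed.

Lemma prob_mx_rows m n (A : pred {ffun 'I_n -> bool}) :
  prob_mx p (fun M : 'M[bool]_(m, n) => [forall i, A (row_ffun M i)]) = row_prob A ^+ m.
Proof.
rewrite -[m in RHS]card_ord -prodr_const /row_prob.
under eq_bigr do rewrite big_mkcond.
rewrite -sum_mx_prod_rows /prob_mx big_mkcond; apply: eq_bigr => M _ /=.
rewrite mx_weight_rows; case: forallP => [allA|/forallP].
  by apply: eq_bigr => i _; rewrite allA.
rewrite negb_forall => /existsP[i notA].
by rewrite (bigD1 i) //= (negbTE notA) mul0r.
Qed.

Lemma row_prob_avoid n (S : {set 'I_n}) : row_prob (fun a => ~~ Trow S a) = p ^+ #|S|.
Proof.
pose F j (b : bool) := if b then (if j \in S then 0 else 1 - p) else p.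
transitivity (\sum_(a : {ffun 'I_n -> bool}) \prod_j F j (a j)).
  rewrite /row_prob big_mkcond; apply: eq_bigr => a _.
  have [/existsP[j /andP[jS aj]]|noS] /= := boolP (Trow S a).
    by rewrite (bigD1 j) //= /F aj jS mul0r.
  apply: eq_bigr => j _; rewrite /F /bern; case aj: (a j) => //.
  by case jS: (j \in S) => //; case/negP: noS; apply/existsP; exists j; rewrite jS aj.
rewrite -bigA_distr_bigA /= -prodr_const [RHS]big_mkcond; apply: eq_bigr => j _.
by rewrite big_bool /F; case: (j \in S); rewrite /= ?add0r ?subrK.
Qed.

Lemma row_prob_total n : row_prob (@predT {ffun 'I_n -> bool}) = 1.
Proof.
by rewrite -(expr0 p) -(cards0 'I_n) -row_prob_avoid; apply: eq_bigl => a; rewrite Trow_set0.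
Qed.

Lemma prob_mxN m n (A : pred 'M[bool]_(m, n)) :
  prob_mx p (fun M => ~~ A M) = 1 - prob_mx p A.
Proof.
have total : \sum_(M : 'M[bool]_(m, n)) mx_weight p M = 1.
  rewrite -(expr1n _ m) -(row_prob_total n) -prob_mx_rows.
  by apply: eq_bigl => M; apply/esym/forallP.
by rewrite -total (bigID A) /= addrC addrK.
Qed.

Definition agree_prob (d1 d2 u : nat) : R := 1 - p ^+ d2 - p ^+ d1 + 2 * p ^+ u.

Lemma row_prob_agree n (I J : {set 'I_n}) :
  row_prob (fun a => Trow J a == Trow I a) = agree_prob #|I| #|J| #|I :|: J|.
Proof.
rewrite /agree_prob -{1}(row_prob_total n) -!row_prob_avoid /row_prob.
rewrite !(big_mkcond (fun a : {ffun _ -> bool} => ~~ Trow _ a)) [LHS]big_mkcond /=.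
rewrite mulr_sumr -!sumrB -big_split /=; apply: eq_bigr => a _.
by rewrite Trow_setU; case: (Trow I a); case: (Trow J a) => /=; ring.
Qed.

Lemma prob_Tmat_eq m n (I J : {set 'I_n}) :
  prob_mx p (fun M : 'M[bool]_(m, n) => Tmat J M == Tmat I M)
  = agree_prob #|I| #|J| #|I :|: J| ^+ m.
Proof. by rewrite -row_prob_agree -prob_mx_rows; apply: eq_bigl => M; apply: Tmat_eq_rows. Qed.

End BernoulliMatrix.

Lemma Pimax_ge0 (R : realFieldType) n d m (p : R) : 0 <= Pimax n d m p.
Proof. exact: bigmax_ge_id. Qed.

Lemma Pfun_le_Pimax (R : realFieldType) n d m (p : R) d1 d2 k :
  (d1 <= d)%N -> (d2 <= d)%N -> admissible d1 d2 k -> Pfun n d1 d2 k p m <= Pimax n d m p.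
Proof.
move=> d1_le d2_le adm.
have k_le : (k <= d)%N.
  by case/andP: adm; rewrite leq_min => /andP[k_le1 _] _; apply: leq_trans d1_le.
apply: le_trans (le_bigmax _ _ (Ordinal (d1_le : (d1 < d.+1)%N))).
apply: le_trans (le_bigmax _ _ (Ordinal (d2_le : (d2 < d.+1)%N))).
exact: (le_bigmax_cond _ (j := Ordinal (k_le : (k < d.+1)%N))).
Qed.

Section BernoulliBounds.
Variables (R : realFieldType) (p : R).
Hypotheses (p_ge0 : 0 <= p) (p_le1 : p <= 1).

Lemma mx_weight_ge0 m n (M : 'M[bool]_(m, n)) : 0 <= mx_weight p M.
Proof.
by apply: prodr_ge0 => i _; apply: prodr_ge0 => j _; case: (M i j); rewrite ?subr_ge0.
Qed.

Lemma prob_not_separable_le m n (I : {set 'I_n}) d :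
  prob_mx p (fun M : 'M[bool]_(m, n) => ~~ separable I d M)
  <= \sum_(J : {set 'I_n} | (#|J| <= d)%N && (J != I))
       prob_mx p (fun M : 'M[bool]_(m, n) => Tmat J M == Tmat I M).
Proof.
rewrite /prob_mx (eq_bigl (fun M : 'M[bool]_(m, n) =>
  [exists J : {set 'I_n}, ((#|J| <= d)%N && (J != I)) && (Tmat J M == Tmat I M)])) => [|M].
  exact: sum_exists_le (@mx_weight_ge0 m n).
by rewrite /separable negb_forall; apply: eq_existsb => J; rewrite negb_imply negbK.
Qed.

(* [p ^+ u] dominates [p ^+ d1 * p ^+ d2], and [1 - a - b + 2ab = (1 - a)(1 - b) + ab]. *)
Lemma agree_prob_ge0 d1 d2 u : (u <= d1 + d2)%N -> 0 <= agree_prob p d1 d2 u.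
Proof.
move=> u_le; rewrite /agree_prob.
have prod_le : p ^+ d1 * p ^+ d2 <= p ^+ u by rewrite -exprD ler_wiXn2l.
have := exprn_ge0 d1 p_ge0; have := exprn_ge0 d2 p_ge0.
have := exprn_ile1 d1 p_ge0 p_le1; have := exprn_ile1 d2 p_ge0 p_le1.
nra.
Qed.

Lemma sum_agree_class n m (I : {set 'I_n}) d2 k : admissible #|I| d2 k ->
  \sum_(J : {set 'I_n} | (#|J| == d2) && (#|I :&: J| == k))
     agree_prob p #|I| #|J| #|I :|: J| ^+ m
  <= 'C(#|I|, k)%:R * Pfun n #|I| d2 k p m.
Proof.
case/andP; rewrite leq_min => /andP[k_le1 k_le2] _.
set Q := agree_prob p #|I| d2 (#|I| + d2 - k) ^+ m.
have Q_ge0 : 0 <= Q by apply/exprn_ge0/agree_prob_ge0; lia.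
rewrite (eq_bigr (fun _ => Q)) => [|J /andP[/eqP cardJ /eqP cardIJ]]; last first.
  have := cardsUI I J; rewrite cardJ cardIJ /Q => cardU.
  by congr (agree_prob _ _ _ _ ^+ _); lia.
set C := [set J : {set 'I_n} | (#|J| == d2) && (#|I :&: J| == k)].
rewrite (eq_bigl (fun J => J \in C)) => [|J]; last by rewrite inE.
rewrite sumr_const -[Q *+ _]mulr_natl /Pfun mulrA -natrX -natrM ler_wpM2r // ler_nat.
exact: card_sets_meeting.
Qed.

Lemma sum_agree_le_Pimax n m d (I : {set 'I_n}) : (#|I| <= d)%N ->
  \sum_(J : {set 'I_n} | (#|J| <= d)%N && (J != I)) agree_prob p #|I| #|J| #|I :|: J| ^+ m
  <= (\sum_(d2 < d.+1) \sum_(k < d.+1 | admissible #|I| d2 k) 'C(#|I|, k))%:R * Pimax n d m p.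
Proof.
move=> cardI_le.
pose sizes (J : {set 'I_n}) : 'I_d.+1 * 'I_d.+1 := (inord #|J|, inord #|I :&: J|).
have sizesE (J : {set 'I_n}) : (#|J| <= d)%N ->
    (sizes J).1 = #|J| :> nat /\ (sizes J).2 = #|I :&: J| :> nat.
  move=> J_le; rewrite /= !inordK // ltnS.
  exact: leq_trans (subset_leq_card (subsetIr I J)) J_le.
have agree_ge0 (J : {set 'I_n}) : 0 <= agree_prob p #|I| #|J| #|I :|: J| ^+ m.
  by apply/exprn_ge0/agree_prob_ge0; rewrite leq_card_setU.
rewrite (partition_big sizes (fun dk => admissible #|I| dk.1 dk.2))
  => [|J /andP[J_le neqJI]]; last first.
  by have [-> ->] := sizesE J J_le; apply: admissible_sizes.
rewrite natr_sum mulr_suml.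
under [X in _ <= X]eq_bigr do rewrite natr_sum mulr_suml.
rewrite [X in _ <= X]pair_big_dep /=; apply: ler_sum => -[d2 k] /= adm.
apply: (@le_trans _ _ (\sum_(J : {set 'I_n} | (#|J| == d2) && (#|I :&: J| == k))
                           agree_prob p #|I| #|J| #|I :|: J| ^+ m)).
  rewrite big_mkcond [X in _ <= X]big_mkcond; apply: ler_sum => J _.
  case: ifP => [/andP[/andP[J_le _] /eqP sizes_eq]|_]; last by case: ifP => _; rewrite ?agree_ge0.
  by have [<- <-] := sizesE J J_le; rewrite sizes_eq !eqxx.
apply: le_trans (sum_agree_class m adm) _.
by rewrite ler_wpM2l // Pfun_le_Pimax // -ltnS.
Qed.

End BernoulliBounds.

Theorem lemma1 (R : realFieldType) (n d m : nat) (p delta : R)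
  (I : {set 'I_n})
  (hn : (1 <= n)%N) (hd : (1 <= d)%N) (hm : (1 <= m)%N)
  (hp0 : 0 < p) (hp1 : p < 1) (hdelta0 : 0 < delta) (hdelta1 : delta < 1)
  (hI : (#|I| <= d)%N)
  (hPi : Pimax n d m p <= delta / ((d ^ 2)%:R * 2 ^+ d)) :
  1 - delta <= prob_mx p (fun M : 'M[bool]_(m, n) => separable I d M).
Proof.
have [p_ge0 p_le1] := (ltW hp0, ltW hp1).
have weight_le : (\sum_(d2 < d.+1) \sum_(k < d.+1 | admissible #|I| d2 k) 'C(#|I|, k))%:R
                 <= (d ^ 2)%:R * 2 ^+ d :> R.
  rewrite -natrX -natrM ler_nat; apply: leq_trans (sum_admissible_bin hI) _.
  by rewrite expnS leq_mul // ?leq_pmull // leq_pexp2l.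
have not_separable_le : prob_mx p (fun M : 'M[bool]_(m, n) => ~~ separable I d M) <= delta.
  apply: le_trans (prob_not_separable_le p_ge0 p_le1 m I d) _.
  under eq_bigr do rewrite prob_Tmat_eq.
  apply: le_trans (sum_agree_le_Pimax p_ge0 p_le1 m hI) _.
  apply: le_trans (ler_wpM2r (Pimax_ge0 n d m p) weight_le) _.
  by rewrite mulrC -ler_pdivlMr // mulr_gt0 // ?ltr0n ?expn_gt0 ?hd // exprn_gt0.
by move: not_separable_le; rewrite prob_mxN; lra.
Qed.
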